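(* The irreducible $\lambda$-quiddities over the ring $(\mathbb{Z}/2\mathbb{Z})\times(\mathbb{Z}/2\mathbb{Z})$ are exactly, up to cyclic permutation, the following tuples (entries written as pairs of residues mod 2): - $((1,1),(1,1),(1,1))$; - $((0,0),(0,0),(0,0),(0,0))$, $((0,0),(0,1),(0,0),(0,1))$, $((0,0),(1,0),(0,0),(1,0))$, $((1,0),(0,1),(1,0),(0,1))$; - $((1,0),(1,0),(1,0),(1,0),(1,0),(1,0))$, $((0,1),(0,1),(0,1),(0,1),(0,1),(0,1))$.
   Context: All rings are commutative with unit. For $a_1,\ldots,a_n\in A$, $M_n(a_1,\ldots,a_n)=\begin{pmatrix}a_n&-1\\1&0\end{pmatrix}\cdots\begin{pmatrix}a_1&-1\\1&0\end{pmatrix}$. An $n$-tuple $(a_1,\ldots,a_n)\in A^n$ is a $\lambda$-quiddity over $A$ if $M_n(a_1,\ldots,a_n)=\pm\mathrm{Id}$. For $(a_1,\ldots,a_n)\in A^n$, $(b_1,\ldots,b_m)\in A^m$, define $(a_1,\ldots,a_n)\oplus(b_1,\ldots,b_m)=(a_1+b_m,a_2,\ldots,a_{n-1},a_n+b_1,b_2,\ldots,b_{m-1})$. Write $(a_1,\ldots,a_n)\sim(b_1,\ldots,b_n)$ if $(b_1,\ldots,b_n)$ is obtained from $(a_1,\ldots,a_n)$ or from $(a_n,\ldots,a_1)$ by a cyclic permutation. A $\lambda$-quiddity $(c_1,\ldots,c_n)$ with $n\ge3$ is reducible if there exist a $\lambda$-quiddity $(b_1,\ldots,b_l)$ and a tuple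 $(a_1,\ldots,a_m)$ with $l,m\ge3$ and $(c_1,\ldots,c_n)\sim(a_1,\ldots,a_m)\oplus(b_1,\ldots,b_l)$; it is irreducible otherwise (by convention $(0,0)$ is reducible). *)

From HB Require Import structures.
From mathcomp Require Import all_boot all_order all_algebra.
Set Implicit Arguments. Unset Strict Implicit. Unset Printing Implicit Defensive.
Import GRing.Theory.
Local Open Scope ring_scope.

Section Quiddity.
Variable A : comRingType.

Definition Mq (a : A) : 'M[A]_2 :=
  \matrix_(i < 2, j < 2)
    (if i == 0 :> nat then (if j == 0 :> nat then a else -1)
     else (if j == 0 :> nat then 1 else 0)).

(** M_n(a_1,...,a_n) = Mq a_n * ... * Mq a_1 *)
Definition Mn (s : seq A) : 'M[A]_2 := foldl (fun acc a => Mq a *m acc) 1%:M s.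

Definition lambda_quiddity (s : seq A) : Prop := Mn s = 1%:M \/ Mn s = - 1%:M.

(** (a_1..a_n) (+) (b_1..b_m) = (a_1+b_m, a_2..a_{n-1}, a_n+b_1, b_2..b_{m-1}),
    meaningful for n, m >= 2 (used only with n, m >= 3). *)
Definition qsum (a b : seq A) : seq A :=
  let n := size a in let m := size b in
  [:: nth 0 a 0 + nth 0 b m.-1] ++ take n.-2 (drop 1 a)
  ++ [:: nth 0 a n.-1 + nth 0 b 0] ++ take m.-2 (drop 1 b).

Definition qequiv (c d : seq A) : Prop :=
  exists k, d = rot k c \/ d = rot k (rev c).

Definition reducible (c : seq A) : Prop :=
  c = [:: 0; 0] \/
  (3 <= size c)%N /\
  exists (a b : seq A), lambda_quiddity b /\ (3 <= size b)%N /\ (3 <= size a)%N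
                        /\ qequiv c (qsum a b).

Definition irreducible_lq (c : seq A) : Prop :=
  lambda_quiddity c /\ (3 <= size c)%N /\ ~ reducible c.

End Quiddity.

Definition Z2Z2 : comRingType := ('Z_2 * 'Z_2)%type.

Definition p (x y : nat) : Z2Z2 := (x%:R, y%:R).

Definition irreducible_list : seq (seq Z2Z2) :=
  [:: [:: p 1 1; p 1 1; p 1 1];
      [:: p 0 0; p 0 0; p 0 0; p 0 0];
      [:: p 0 0; p 0 1; p 0 0; p 0 1];
      [:: p 0 0; p 1 0; p 0 0; p 1 0];
      [:: p 1 0; p 0 1; p 1 0; p 0 1];
      [:: p 1 0; p 1 0; p 1 0; p 1 0; p 1 0; p 1 0];
      [:: p 0 1; p 0 1; p 0 1; p 0 1; p 0 1; p 0 1]].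

From mathcomp Require Import all_boot all_order all_algebra.
From mathcomp Require Import zify.
Set Implicit Arguments. Unset Strict Implicit. Unset Printing Implicit Defensive.
Import GRing.Theory.
Local Open Scope ring_scope.

(* Over (Z/2)x(Z/2) we have -1 = 1, so a lambda-quiddity is a word whose
   matrix product is the identity. A word containing the interior of a
   lambda-quiddity b together with at least three more letters is reducible,
   as it is then some a (+) b. Since ((1,1),(1,1),(1,1)) is a lambda-quiddity,
   an irreducible word of length >= 4 avoids (1,1); two adjacent letters other
   than (1,1) form the interior of a lambda-quiddity of length 4 unless both
   equal (1,0) or both equal (0,1). So an irreducible word of length >= 5 is
   constant with letter (1,0) or (0,1); six such letters form a
   lambda-quiddity, which bounds the length by 6, and five do not. Lengths 3
   and 4, as well as the irreducibility of the listed words, are settled by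
   exhaustive computation. *)

Section Reducibility.
Variable A : comNzRingType.

Lemma qsum_cons_rcons (a0 al b0 bl : A) (am bm : seq A) :
  qsum (a0 :: rcons am al) (b0 :: rcons bm bl) = (a0 + bl) :: am ++ (al + b0) :: bm.
Proof.
rewrite /qsum /= !size_rcons /= !nth_rcons ltnn eqxx.
by rewrite ltnn eqxx !drop0 -!cats1 !take_size_cat.
Qed.

(* A rotation of [c] is [a (+) b], where [a] is the rest of [c] with its two
   end letters corrected by those of [b]. *)
Lemma reducible_of_infix (c s1 bm s2 : seq A) (b0 bl : A) :
  lambda_quiddity (b0 :: rcons bm bl) -> bm != [::] -> (size bm + 3 <= size c)%N ->
  c = s1 ++ bm ++ s2 -> reducible c.
Proof.
move=> Hb Hbm Hsize Hc; right; split; first by move: Hsize; lia.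
have Hrot : rot (size (s1 ++ bm)) c = (s2 ++ s1) ++ bm.
  by rewrite Hc catA rot_size_cat catA.
have : (3 <= size (s2 ++ s1))%N.
  by move: Hsize; rewrite Hc !size_cat; lia.
case: (s2 ++ s1) Hrot => [|y0 y] //; case/lastP: y => [|ym yl] // Hrot Hy.
exists ((y0 - bl) :: rcons ym (yl - b0)), (b0 :: rcons bm bl).
do 2!split => //=.
  by rewrite size_rcons; case: (bm) Hbm.
split; first by move: Hy; rewrite /= !size_rcons.
exists (size (s1 ++ bm)); left.
by rewrite qsum_cons_rcons Hrot !subrK /= cat_rcons.
Qed.

End Reducibility.

Lemma nseq_of_adjacent_eq (T : Type) (c : seq T) (x0 : T) :
  (forall s1 u v s2, c = s1 ++ u :: v :: s2 -> v = u) -> c = nseq (size c) (head x0 c).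
Proof.
elim: c => //= x c IH Hadj; case: c IH Hadj => //= y c IH Hadj.
have Hyx : y = x by apply: (Hadj [::] x y c).
have Hc : y :: c = nseq (size c).+1 y.
  by apply: IH => s1 u v s2 E; apply: (Hadj (x :: s1)); rewrite E.
by rewrite {1}Hc Hyx.
Qed.

Definition all_rotations (T : Type) (P : pred (seq T)) (s : seq T) : bool :=
  all (fun i => P (rot i s)) (iota 0 (size s)).

Lemma all_rotationsP (T : Type) (P : pred (seq T)) (s : seq T) j :
  (0 < size s)%N -> all_rotations P s -> P (rot j s).
Proof.
move=> Hs /allP Hall; case: (ltnP j (size s)) => Hj.
  by apply: Hall; rewrite mem_iota.
by rewrite rot_oversize // -(rot0 s); apply: Hall; rewrite mem_iota.
Qed.

(* Mathcomp matrices are locked and do not reduce, so lambda-quiddities are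
   decided by computing on the tuple of entries [(m11, m12, m21, m22)]. *)
Section MatrixTuples.
Variable A : comNzRingType.

Definition mx4 := (A * A * A * A)%type.

Definition mx_of4 (t : mx4) : 'M[A]_2 :=
  let '(m11, m12, m21, m22) := t in
  \matrix_(i < 2, j < 2)
    (if i == 0 :> nat then (if j == 0 :> nat then m11 else m12)
     else (if j == 0 :> nat then m21 else m22)).

Definition id4 : mx4 := (1, 0, 0, 1).

Definition mulMq4 (t : mx4) (a : A) : mx4 :=
  let '(m11, m12, m21, m22) := t in (a * m11 - m21, a * m12 - m22, m11, m12).

Definition Mn4 (s : seq A) : mx4 := foldl mulMq4 id4 s.

Lemma mulMq_mx_of4 a t : Mq a *m mx_of4 t = mx_of4 (mulMq4 t a).
Proof.
case: t => [[[m11 m12] m21] m22]; apply/matrixP => i j.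
rewrite !mxE !big_ord_recr big_ord0 /= !mxE /= add0r.
case: i => [[|[|//]] Hi]; case: j => [[|[|//]] Hj] /=;
  by rewrite ?mul1r ?mul0r ?mulN1r ?addr0 ?add0r.
Qed.

Lemma mx_of4_id : mx_of4 id4 = 1%:M.
Proof.
apply/matrixP => i j; rewrite !mxE.
by case: i => [[|[|//]] Hi]; case: j => [[|[|//]] Hj].
Qed.

Lemma Mn_mx_of4 s : Mn s = mx_of4 (Mn4 s).
Proof.
rewrite /Mn /Mn4 -mx_of4_id; elim: s id4 => //= a s IH t.
by rewrite mulMq_mx_of4 IH.
Qed.

Lemma mx_of4_inj : injective mx_of4.
Proof.
move=> [[[a b] c] d] [[[a' b'] c'] d'] /matrixP E.
move: (E 0 0) (E 0 1) (E 1 0) (E 1 1); rewrite !mxE /=.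
by move=> -> -> -> ->.
Qed.

End MatrixTuples.

Arguments id4 {A}.

Definition lambda_quiddityb (s : seq Z2Z2) : bool := Mn4 s == id4.

Lemma lambda_quiddityP s : reflect (lambda_quiddity s) (lambda_quiddityb s).
Proof.
have oppmx1 : (- 1%:M : 'M[Z2Z2]_2) = 1%:M.
  have N1 : (-1 : Z2Z2) = 1 by apply/eqP; vm_compute.
  by apply/matrixP => i j; rewrite !mxE; case: (i == j); rewrite /= ?oppr0 ?N1.
rewrite /lambda_quiddity oppmx1 Mn_mx_of4 -mx_of4_id.
by apply: (iffP eqP) => [-> | [] /mx_of4_inj]; [left | |].
Qed.

Definition Z2Z2_enum : seq Z2Z2 := [:: p 0 0; p 0 1; p 1 0; p 1 1].

Lemma allZ2Z2 (P : pred Z2Z2) : all P Z2Z2_enum -> forall x, P x.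
Proof.
by move=> /allP HP [[[|[|n]] Hx] [[|[|m]] Hy]]; apply: HP.
Qed.

Definition constant_letters : seq Z2Z2 := [:: p 1 0; p 0 1].

Lemma irreducible_notin_p11 c : (4 <= size c)%N -> ~ reducible c -> p 1 1 \notin c.
Proof.
move=> Hs Hnr; apply/negP => Hin; move: Hs Hnr; case/splitPr: Hin => s1 s2 Hs Hnr.
apply: Hnr; apply: (@reducible_of_infix _ _ s1 [:: p 1 1] s2 (p 1 1) (p 1 1)) => //.
by apply/lambda_quiddityP; vm_compute.
Qed.

Lemma adjacent_letters_check : all (fun u => all (fun v =>
  (u != p 1 1) && (v != p 1 1) ==>
    (v == u) && (u \in constant_letters) ||
    has (fun b0 => has (fun bl => lambda_quiddityb [:: b0; u; v; bl]) Z2Z2_enum) Z2Z2_enum)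
  Z2Z2_enum) Z2Z2_enum.
Proof. by vm_compute. Qed.

Lemma irreducible_adjacent_eq c s1 u v s2 : (5 <= size c)%N -> ~ reducible c ->
  c = s1 ++ u :: v :: s2 -> v = u /\ u \in constant_letters.
Proof.
move=> Hs Hnr Hc; have Hn := irreducible_notin_p11 (ltnW Hs) Hnr.
have Hu : u != p 1 1.
  by apply: contraNneq Hn => <-; rewrite Hc mem_cat in_cons eqxx orbT.
have Hv : v != p 1 1.
  by apply: contraNneq Hn => <-; rewrite Hc mem_cat !in_cons eqxx !orbT.
move: adjacent_letters_check => /allZ2Z2/(_ u)/allZ2Z2/(_ v); rewrite Hu Hv andbT implyTb.
case/orP => [/andP [/eqP -> ->] // | /hasP [b0 _ /hasP [bl _ /lambda_quiddityP Hb]]].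
exfalso; apply: Hnr; apply: (@reducible_of_infix _ c s1 [:: u; v] s2 b0 bl Hb) => //.
Qed.

Lemma irreducible_constant c : (5 <= size c)%N -> ~ reducible c ->
  exists2 e, e \in constant_letters & c = nseq (size c) e.
Proof.
move=> Hs Hnr; have Hadj := irreducible_adjacent_eq Hs Hnr.
exists (head (p 0 0) c).
  by case: c Hs Hnr Hadj => [|x [|y c]] // _ _ Hadj; case: (Hadj [::] x y c).
by apply: nseq_of_adjacent_eq => s1 u v s2 /Hadj [].
Qed.

Lemma constant_letters_check : all (fun e =>
  [&& lambda_quiddityb (nseq 6 e), ~~ lambda_quiddityb (nseq 5 e) & nseq 6 e \in irreducible_list]) constant_letters.
Proof. by vm_compute. Qed.

Lemma reducible_nseq e n : e \in constant_letters -> (7 <= n)%N -> reducible (nseq n e).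
Proof.
move=> He Hn; have /and3P [Hq6 _ _] := allP constant_letters_check e He.
apply: (@reducible_of_infix _ _ [::] (nseq 4 e) (nseq (n - 4) e) e e).
- exact/lambda_quiddityP.
- by [].
- by rewrite !size_nseq.
- by rewrite cat0s -nseqD subnKC //; lia.
Qed.

Definition listed (c : seq Z2Z2) : bool :=
  has (fun t => has (fun k => c == rot k t) (iota 0 (size t))) irreducible_list.

Lemma listedP c : listed c -> exists k t, t \in irreducible_list /\ c = rot k t.
Proof. by case/hasP => t Ht /hasP [k _ /eqP ->]; exists k, t. Qed.

Lemma length3_check : all (fun x => all (fun y => all (fun z =>
  lambda_quiddityb [:: x; y; z] ==> listed [:: x; y; z]) Z2Z2_enum) Z2Z2_enum) Z2Z2_enum.
Proof. by vm_compute. Qed.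

Lemma length4_check : all (fun x => all (fun y => all (fun z => all (fun w =>
  (p 1 1 \notin [:: x; y; z; w]) && lambda_quiddityb [:: x; y; z; w] ==> listed [:: x; y; z; w])
  Z2Z2_enum) Z2Z2_enum) Z2Z2_enum) Z2Z2_enum.
Proof. by vm_compute. Qed.

Lemma irreducible_listed c : irreducible_lq c -> listed c.
Proof.
case=> /lambda_quiddityP Hq [Hs Hnr]; case: (ltnP (size c) 5) => [Hlt5 | Hge5].
  case: c Hs Hq Hnr Hlt5 => [|x [|y [|z [|w [|? ?]]]]] // _ Hq Hnr _.
    by move: length3_check => /allZ2Z2/(_ x)/allZ2Z2/(_ y)/allZ2Z2/(_ z); rewrite Hq.
  have Hn := irreducible_notin_p11 (isT : (4 <= size [:: x; y; z; w])%N) Hnr.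
  move: length4_check => /allZ2Z2/(_ x)/allZ2Z2/(_ y)/allZ2Z2/(_ z)/allZ2Z2/(_ w).
  by rewrite Hn Hq.
have [e He Hc] := irreducible_constant Hge5 Hnr.
have /and3P [_ Hnq5 Hlisted6] := allP constant_letters_check e He.
move: (size c) Hc Hge5 => n -> Hge5 in Hq Hnr *.
have [Hn7 | Hn6] := leqP 7 n; first by case: Hnr; exact: reducible_nseq.
have [En | En] : n = 5%N \/ n = 6%N by lia.
all: rewrite En in Hq *.
- by rewrite Hq in Hnq5.
- by apply/hasP; exists (nseq 6 e) => //; apply/hasP; exists 0%N; rewrite ?rot0.
Qed.

(* No suffix of [d] of length between 1 and [size d - 3] is the interior of a
   lambda-quiddity; such a suffix is what a decomposition [d = a (+) b] exhibits. *)
Definition quiddity_suffix_free (d : seq Z2Z2) : bool :=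
  all (fun m => all (fun b0 => all (fun bl =>
    ~~ lambda_quiddityb (b0 :: rcons (drop (size d - m) d) bl)) Z2Z2_enum) Z2Z2_enum)
  (iota 1 (size d - 3)).

Lemma qsum_not_suffix_free a b : (3 <= size a)%N -> (3 <= size b)%N ->
  lambda_quiddity b -> quiddity_suffix_free (qsum a b) = false.
Proof.
case: a => [|a0 a] //; case/lastP: a => [|am al] // Ha.
case: b => [|b0 b] //; case/lastP: b => [|bm bl] // Hb /lambda_quiddityP Hq.
rewrite qsum_cons_rcons -cat_rcons -cat_cons.
set d := _ :: rcons am _; have Hd : size d = (size am).+2 by rewrite /= size_rcons.
apply/negbTE/allP => /(_ (size bm)).
rewrite mem_iota size_cat addnK drop_size_cat // Hd.
have Hm : (1 <= size bm < 1 + ((size am).+2 + size bm - 3))%N.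
  by move: Ha Hb; rewrite /= !size_rcons; lia.
by move=> /(_ Hm)/allZ2Z2/(_ b0)/allZ2Z2/(_ bl); rewrite Hq.
Qed.

Definition irreducibleb (c : seq Z2Z2) : bool :=
  [&& lambda_quiddityb c, all_rotations quiddity_suffix_free c
           & all_rotations quiddity_suffix_free (rev c)].

Lemma irreducibleb_irreducible c : (3 <= size c)%N -> irreducibleb c -> irreducible_lq c.
Proof.
move=> Hs /and3P [/lambda_quiddityP Hq Hrot Hrev]; do 2!split => //.
case=> [Hc | [_ [a [b [Hb [Hbs [Has [j Hj]]]]]]]]; first by rewrite Hc in Hs.
have Hc0 : (0 < size c)%N by lia.
have := qsum_not_suffix_free Has Hbs Hb.
case: Hj => ->; first by rewrite (all_rotationsP j Hc0 Hrot).
by rewrite (all_rotationsP j _ Hrev) // size_rev.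
Qed.

Lemma irreducible_list_check : all (all_rotations irreducibleb) irreducible_list.
Proof. by vm_compute. Qed.

Theorem theorem2p6 (c : seq Z2Z2) :
  irreducible_lq c <-> exists (k : nat) (t : seq Z2Z2), t \in irreducible_list /\ c = rot k t.
Proof.
split=> [Hc | [k [t [Ht ->]]]]; first exact/listedP/irreducible_listed.
have Hst : (3 <= size t)%N by move: t Ht; apply/allP.
apply: irreducibleb_irreducible; first by rewrite size_rot.
by apply: all_rotationsP; [lia | exact: (allP irreducible_list_check)].
Qed.
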